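(* Let $(A,d)$ be a $\mathbb{Z}/2$-graded $\Lambda$-algebra (not necessarily associative or commutative) with a differential $d$ satisfying the graded Leibniz rule, equipped with a map $\operatorname{val}:A\to\mathbb{R}\cup\{+\infty\}$ such that $\operatorname{val}^{-1}(+\infty)=\{0\}$ and for all $c\in\Lambda$, $x,y\in A$: $\operatorname{val}(x\cdot y)\ge\operatorname{val}(x)+\operatorname{val}(y)$, $\operatorname{val}(dx)\ge\operatorname{val}(x)$, $\operatorname{val}(cx)=\operatorname{val}(c)+\operatorname{val}(x)$, $\operatorname{val}(x+y)\ge\min\{\operatorname{val}(x),\operatorname{val}(y)\}$; assume $A$ is complete with respect to the norm $e^{-\operatorname{val}}$. Let $a,b\in H(A)$ satisfy $ba=\lambda a$ for some nonzero $\lambda\in\Lambda$, and assume $b$ has a representative of valuation strictly larger than $\operatorname{val}(\lambda)$. Then $a=0$.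
   Context: $\Lambda$ is the Novikov field of series $\sum_{i\ge0}a_iT^{\lambda_i}$, $a_i\in\mathbb{Q}$, $\lambda_i\in\mathbb{R}$ strictly increasing to $+\infty$, with valuation $\operatorname{val}$. $H(A)$ denotes the cohomology of $(A,d)$ with its induced product. *)

From HB Require Import structures.
From mathcomp Require Import all_boot all_order all_algebra.
From mathcomp Require Import boolp classical_sets functions cardinality fsbigop.
From mathcomp Require Import reals constructive_ereal ereal Rstruct.
Set Implicit Arguments. Unset Strict Implicit. Unset Printing Implicit Defensive.
Import Order.TTheory GRing.Theory Num.Theory.
Local Open Scope classical_set_scope.
Local Open Scope ring_scope.

Notation RR := Rdefinitions.R.

(* The (universal) Novikov field Lambda over Q.                         *)
(* A series  sum_i a_i T^{lambda_i}  (a_i in Q, lambda_i strictly       *)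
(* increasing to +oo) is represented by its coefficient function        *)
(* f : R -> Q, f(r) = coefficient of T^r; such functions are exactly    *)
(* those whose support meets every half-line (-oo, C] in a finite set.  *)
Definition nov := RR -> rat.

Definition nov_supp (f : nov) : set RR := [set r | f r != 0].

Definition is_nov (f : nov) : Prop :=
  forall C : RR, finite_set [set r | r <= C /\ f r != 0].

Definition nov0 : nov := fun _ => 0.
Definition nov1 : nov := fun r => if r == 0 then 1 else 0.
Definition nov_add (f g : nov) : nov := fun r => f r + g r.
(* Cauchy product: (f g)(r) = sum_{s + t = r} f(s) g(t)  (a finite sum
   for Novikov series). *)
Definition nov_mul (f g : nov) : nov :=
  fun r => \sum_(s \in nov_supp f) f s * g (r - s).

Definition nov_val (f : nov) : \bar RR :=
  ereal_inf [set (r%:E) | r in nov_supp f].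

(*   gr i x : x is homogeneous of degree i in Z/2 (false = even)        *)
Record valued_dga (A : zmodType) (sc : nov -> A -> A) (mul : A -> A -> A)
    (d : A -> A) (gr : bool -> A -> Prop) (val : A -> \bar RR) : Prop := {
  sc_addr : forall c x y, is_nov c -> sc c (x + y) = sc c x + sc c y;
  sc_addl : forall c c' x, is_nov c -> is_nov c' ->
              sc (nov_add c c') x = sc c x + sc c' x;
  sc_mul : forall c c' x, is_nov c -> is_nov c' ->
              sc (nov_mul c c') x = sc c (sc c' x);
  sc_one : forall x, sc nov1 x = x;
  mul_addl : forall x y z, mul (x + y) z = mul x z + mul y z;
  mul_addr : forall x y z, mul x (y + z) = mul x y + mul x z;
  mul_scl : forall c x y, is_nov c -> mul (sc c x) y = sc c (mul x y);
  mul_scr : forall c x y, is_nov c -> mul x (sc c y) = sc c (mul x y);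
  (* Z/2-grading: A = A_0 (+) A_1 as Lambda-modules, A_i A_j in A_{i+j} *)
  gr_zero : forall i, gr i 0;
  gr_add : forall i x y, gr i x -> gr i y -> gr i (x + y);
  gr_sc : forall i c x, is_nov c -> gr i x -> gr i (sc c x);
  gr_span : forall x, exists x0 x1, gr false x0 /\ gr true x1 /\ x = x0 + x1;
  gr_direct : forall x, gr false x -> gr true x -> x = 0;
  gr_mul : forall i j x y, gr i x -> gr j y -> gr (addb i j) (mul x y);
  d_add : forall x y, d (x + y) = d x + d y;
  d_sc : forall c x, is_nov c -> d (sc c x) = sc c (d x);
  d_gr : forall i x, gr i x -> gr (~~ i) (d x);
  d_d : forall x, d (d x) = 0;
  d_leibniz : forall i x y, gr i x ->
      d (mul x y) = mul (d x) y + (if i then - mul x (d y) else mul x (d y));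
  val_ninfty : forall x, val x != -oo%E;
  val_pinfty : forall x, val x = +oo%E <-> x = 0;
  val_mul : forall x y, (val x + val y <= val (mul x y))%E;
  val_d : forall x, (val x <= val (d x))%E;
  val_sc : forall c x, is_nov c -> val (sc c x) = (nov_val c + val x)%E;
  val_add : forall x y, (Order.min (val x) (val y) <= val (x + y)%R)%E;
  val_complete : forall u : nat -> A,
      (forall M : RR, exists N, forall m n, (N <= m)%N -> (N <= n)%N ->
           (M%:E <= val (u m - u n)%R)%E) ->
      exists l : A, forall M : RR, exists N, forall n, (N <= n)%N ->
           (M%:E <= val (u n - l)%R)%E
}.

(* Cohomology H(A) = ker d / im d, handled through representatives. *)
Definition is_cycle (A : zmodType) (d : A -> A) (x : A) : Prop := d x = 0.
Definition is_exact (A : zmodType) (d : A -> A) (x : A) : Prop :=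
  exists y, x = d y.

(* Normalise lam = lam_v T^v (1 + eta) with v the least exponent of lam and
   val eta > 0; a Neumann series in the complete algebra A shows that scalar
   multiplication by lam is bijective and shifts val by exactly v.  Hence
   L y := lam^-1 (beta y) raises val by val beta - v > 0: y + L has a fixed
   point and L fixes only 0.  The relation b a = lam a reads
   alpha = L alpha - d s.  As beta is closed, the graded Leibniz rule gives
   L (d w) = d (L' w), where L' is L with beta replaced by its parity
   conjugate, and conjugating L' by the parity involution gives back L.  So a
   fixed point W = L' W - s exists, and then alpha - d W is fixed by L, i.e.
   alpha = d W. *)

From Pilot Require Import Defs.
From HB Require Import structures.
From mathcomp Require Import all_boot all_order all_algebra.
From mathcomp Require Import boolp classical_sets functions cardinality fsbigop.
From mathcomp Require Import reals constructive_ereal ereal Rstruct.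
From mathcomp Require Import lra.
Set Implicit Arguments. Unset Strict Implicit. Unset Printing Implicit Defensive.
Import Order.TTheory GRing.Theory Num.Theory.
Local Open Scope ring_scope.

Section AdditiveMorph.
Variables (U V : zmodType) (f : U -> V).
Hypothesis fD : {morph f : x y / x + y}.

Lemma morph_add0 : f 0 = 0.
Proof. by apply/(@addrI _ (f 0)); rewrite -fD !addr0. Qed.

Lemma morph_addN : {morph f : x / - x}.
Proof. by move=> x; apply/eqP; rewrite -addr_eq0 -fD addNr morph_add0. Qed.

Lemma morph_addB : {morph f : x y / x - y}.
Proof. by move=> x y; rewrite fD morph_addN. Qed.

End AdditiveMorph.

Section Novikov.
Local Open Scope classical_set_scope.

Lemma finite_set_min (S : set RR) x0 : finite_set S -> S x0 ->
  exists2 m, S m & forall x, S x -> m <= x.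
Proof.
move=> /finite_seqP[s ->] /= x0s.
exists (\big[Order.min/x0]_(x <- s) x); last by move=> x xs; apply: ge_bigmin_seq.
rewrite big_seq; elim/big_ind: _ => // a b sa sb.
by rewrite /Num.min /Order.min; case: ifP.
Qed.

Lemma nov_min_exponent (f : nov) : is_nov f -> f <> nov0 ->
  exists2 v, f v != 0 & forall r, f r != 0 -> v <= r.
Proof.
move=> f_nov f0.
have [s fs] : exists s, f s != 0.
  apply/not_existsP => fs0; apply: f0; apply: funext => r.
  by have := fs0 r; rewrite /nov0; case: eqP.
have [v [vs fv] vmin] := finite_set_min (f_nov s) (conj (lexx s) fs).
exists v => // r fr; case: (lerP r s) => [rs|/ltW sr]; first exact: vmin.
exact: le_trans vs sr.
Qed.

Lemma nov_gap (f : nov) a : is_nov f ->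
  exists2 b, a < b & forall r, f r != 0 -> a < r -> b <= r.
Proof.
move=> f_nov.
pose S := [set r | a < r /\ r <= a + 1 /\ f r != 0] `|` [set a + 1].
have finS : finite_set S.
  rewrite finite_setU; split; last exact: finite_set1.
  by apply: sub_finite_set (f_nov (a + 1)) => r [_ [ra fr]].
have [b Sb bmin] := finite_set_min finS (or_intror erefl).
exists b; first by case: Sb => [[]|->] //; lra.
move=> r fr ar; case: (lerP r (a + 1)) => [ra|/ltW ra].
  by apply: bmin; left.
exact: le_trans (bmin (a + 1) (or_intror erefl)) ra.
Qed.

Definition mono (c : rat) (p : RR) : nov := fun r => if r == p then c else 0.

Lemma is_nov_mono c p : is_nov (mono c p).
Proof.
move=> C; apply: (sub_finite_set _ (finite_set1 p)) => r /= [_].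
by rewrite /mono; case: ifP => [/eqP|] //; rewrite eqxx.
Qed.

Lemma is_nov1 : is_nov nov1.
Proof. exact: is_nov_mono. Qed.

Lemma nov_mul_mono c p g : c != 0 -> nov_mul (mono c p) g = fun r => c * g (r - p).
Proof.
move=> c0; apply: funext => r; rewrite /nov_mul.
have -> : nov_supp (mono c p) = [set p].
  apply/seteqP; split => s; rewrite /nov_supp /mono /=; first by case: ifP => // /eqP.
  by move=> ->; rewrite eqxx.
by rewrite fsbig_set1 /mono eqxx.
Qed.

Lemma nov_val_ge f a : (forall r, f r != 0 -> a <= r) -> (a%:E <= nov_val f)%E.
Proof.
by move=> fa; apply: le_ereal_inf_tmp => _ [r /= fr <-]; rewrite lee_fin fa.
Qed.

Lemma nov_val_le f r : f r != 0 -> (nov_val f <= r%:E)%E.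
Proof. by move=> fr; apply: ereal_inf_lbound; exists r. Qed.

Lemma nov_val_mono c p : c != 0 -> nov_val (mono c p) = p%:E.
Proof.
move=> c0; apply/eqP; rewrite eq_le nov_val_le ?nov_val_ge //.
  by move=> r; rewrite /mono; case: ifP => [/eqP -> _|_]; rewrite ?lexx ?eqxx.
by rewrite /mono eqxx.
Qed.

Section Normalisation.
Variables (lam : nov) (v : RR).
Hypotheses (lam_nov : is_nov lam) (lam_v : lam v != 0)
  (lam_min : forall r, lam r != 0 -> v <= r).

(* lam = lam v T^v (1 + nov_tail) *)
Definition nov_tail : nov := fun r => (lam v)^-1 * lam (r + v) - nov1 r.

Lemma is_nov_tail : is_nov nov_tail.
Proof.
move=> C.
apply: (sub_finite_set (B := (fun s => s - v) @`
  [set s | s <= C + v /\ lam s != 0] `|` [set 0])).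
  move=> r /= [rC]; rewrite /nov_tail.
  have [->|lrv _] := eqVneq (lam (r + v)) 0.
    rewrite mulr0 sub0r oppr_eq0 /nov1.
    by case: ifP => [/eqP -> _|_]; [right | rewrite eqxx].
  by left; exists (r + v); [split => //; lra | rewrite addrK].
rewrite finite_setU; split; last exact: finite_set1.
exact/finite_image/lam_nov.
Qed.

Lemma nov_tail_supp_gt0 r : nov_tail r != 0 -> 0 < r.
Proof.
rewrite /nov_tail /nov1; case: (ltrgtP r 0) => // [r0|->].
  suff -> : lam (r + v) = 0 by rewrite mulr0 subrr eqxx.
  by apply/eqP; apply: contraTT r0 => /lam_min; rewrite -lerBlDr subrr -leNgt.
by rewrite add0r mulVf // subrr eqxx.
Qed.

Lemma nov_val_tail_gt0 : exists2 δ, 0 < δ & (δ%:E <= nov_val nov_tail)%E.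
Proof.
have [δ δ0 δmin] := nov_gap 0 is_nov_tail.
exists δ => //; apply: nov_val_ge => r er.
exact: δmin er (nov_tail_supp_gt0 er).
Qed.

Lemma nov_mul_lead_inv : nov_mul (mono (lam v)^-1 (- v)) lam = nov_add nov1 nov_tail.
Proof.
rewrite nov_mul_mono ?invr_eq0 //; apply: funext => r.
by rewrite /nov_add /nov_tail opprK addrCA subrr addr0.
Qed.

Lemma nov_val_lead : nov_val lam = v%:E.
Proof. by apply/eqP; rewrite eq_le nov_val_le // nov_val_ge. Qed.

End Normalisation.
End Novikov.

#[local] Hint Resolve is_nov_mono is_nov1 : core.

Section ValuedDGA.
Variables (A : zmodType) (sc : nov -> A -> A) (mul : A -> A -> A)
    (d : A -> A) (gr : bool -> A -> Prop) (val : A -> \bar RR).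
Hypothesis HA : valued_dga sc mul d gr val.

Lemma scD c : is_nov c -> {morph sc c : x y / x + y}.
Proof. by move=> c_nov x y; apply: (sc_addr HA). Qed.

Lemma mulDl y : {morph mul^~ y : x z / x + z}.
Proof. by move=> x z /=; rewrite (Defs.mul_addl HA). Qed.

Lemma mulDr x : {morph mul x : y z / y + z}.
Proof. by move=> y z; apply: (Defs.mul_addr HA). Qed.

Lemma dD : {morph d : x y / x + y}.
Proof. exact: (d_add HA). Qed.

Lemma sc_mono0 x : sc (mono 0 0) x = 0.
Proof.
apply/(@addrI _ (sc (mono 0 0) x)); rewrite addr0 -(sc_addl HA) //.
by congr sc; apply: funext => r; rewrite /nov_add /mono; case: ifP; rewrite addr0.
Qed.

Lemma scN1 x : sc (mono (-1) 0) x = - x.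
Proof.
apply/eqP; rewrite -addr_eq0 addrC -{1}(sc_one HA x) -(sc_addl HA) //.
rewrite -(sc_mono0 x); apply/eqP; congr sc; apply: funext => r.
by rewrite /nov_add /nov1 /mono; case: ifP; rewrite ?subrr ?addr0.
Qed.

Lemma grN i x : gr i x -> gr i (- x).
Proof. by rewrite -scN1; apply: (gr_sc HA). Qed.

Lemma val_oppr x : val (- x) = val x.
Proof. by rewrite -scN1 (val_sc HA) // nov_val_mono ?add0e. Qed.

Lemma val_addr_ge K x y :
  (K <= val x)%E -> (K <= val y)%E -> (K <= val (x + y))%E.
Proof. by move=> Kx Ky; apply: le_trans (val_add HA x y); rewrite le_min Kx Ky. Qed.

Lemma val_eq0 x : (forall M : RR, (M%:E <= val x)%E) -> x = 0.
Proof.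
move=> xM; apply/(val_pinfty HA); move: xM (val_ninfty HA x).
case: (val x) => [r /(_ (r + 1))||//]; last by [].
by rewrite lee_fin => r1r; exfalso; lra.
Qed.

Lemma val_bounded_below x : exists M : RR, (M%:E <= val x)%E.
Proof.
have := val_ninfty HA x; case: (val x) => [r _|_|//]; first by exists r.
by exists 0; rewrite leey.
Qed.

Lemma sc_injective c : is_nov c -> nov_val c != +oo%E -> injective (sc c).
Proof.
move=> c_nov cfin x y /eqP; rewrite -subr_eq0 -(morph_addB (scD c_nov)) => /eqP.
move/(val_pinfty HA); rewrite (val_sc HA) // => val_inf.
apply/eqP; rewrite -subr_eq0; apply/eqP/(val_pinfty HA).
move: cfin val_inf (val_ninfty HA (x - y)).
by case: (nov_val c) => [r| |]; case: (val (x - y)).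
Qed.

Definition contracting (H : A -> A) (δ : RR) :=
  forall (M : RR) x, (M%:E <= val x)%E -> ((M + δ)%:E <= val (H x))%E.

Lemma contracting_fix_eq0 H δ x : 0 < δ -> contracting H δ -> H x = x -> x = 0.
Proof.
move=> δ0 Hc Hx; apply/(val_pinfty HA).
have := Hc^~ x; rewrite Hx; move: (val_ninfty HA x).
case: (val x) => [r _ /(_ r (lexx _))|//|//].
by rewrite lee_fin => rδ; exfalso; lra.
Qed.

Lemma exists_nat_step (M M0 δ : RR) : 0 < δ -> exists N : nat, M <= M0 + N%:R * δ.
Proof.
move=> δ0; exists (Num.bound `|(M - M0) / δ|).
rewrite -lerBlDl -ler_pdivrMr //; apply: le_trans (ler_norm _) _.
exact/ltW/archi_boundP.
Qed.

Lemma val_cvg_of_steps (u : nat -> A) (M0 δ : RR) : 0 < δ ->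
  (forall n, ((M0 + n%:R * δ)%:E <= val (u n.+1 - u n))%E) ->
  exists l, forall M : RR, exists N, forall n, (N <= n)%N -> (M%:E <= val (u n - l))%E.
Proof.
move=> δ0 steps.
have tail n m : (n <= m)%N -> ((M0 + n%:R * δ)%:E <= val (u m - u n))%E.
  move/subnK <-; elim: (m - n)%N => [|k IH]; first by rewrite subrr (val_pinfty HA 0).2 ?leey.
  rewrite addSn -(subrK (u (k + n)%N) (u (k + n).+1)) -addrA.
  apply: val_addr_ge => //; apply: le_trans (steps _); rewrite lee_fin lerD2l.
  by rewrite ler_wpM2r ?(ltW δ0) // ler_nat leq_addl.
apply: (val_complete HA) => M; have [N MN] := exists_nat_step M M0 δ0.
have MNn n : (N <= n)%N -> M <= M0 + n%:R * δ.
  by move=> Nn; apply: le_trans MN _; rewrite lerD2l ler_wpM2r ?(ltW δ0) ?ler_nat.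
exists N => m n Nm Nn; case: (leqP n m) => [nm|/ltnW mn].
  by apply: le_trans (tail _ _ nm); rewrite lee_fin MNn.
by rewrite -val_oppr opprB; apply: le_trans (tail _ _ mn); rewrite lee_fin MNn.
Qed.

(* The Neumann series y + H y + H (H y) + ... *)
Lemma contracting_fixpoint H δ : 0 < δ -> {morph H : x y / x + y} ->
  contracting H δ -> forall y, exists x, x = y + H x.
Proof.
move=> δ0 HD Hc y.
pose u := fix u n := if n is n'.+1 then y + H (u n') else 0.
have [M0 yM0] := val_bounded_below y.
have steps n : ((M0 + n%:R * δ)%:E <= val (u n.+1 - u n))%E.
  elim: n => [|n IH]; first by rewrite /= mul0r addr0 morph_add0 // addr0 subr0.
  have -> : u n.+2 - u n.+1 = H (u n.+1 - u n).
    by rewrite /= (morph_addB HD) opprD addrACA subrr add0r.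
  by apply: le_trans (Hc _ _ IH); rewrite lee_fin -natr1 mulrDl mul1r addrA.
have [l ul] := val_cvg_of_steps δ0 steps.
exists l; apply/eqP; rewrite -subr_eq0; apply/eqP; apply: val_eq0 => M.
have [N1 ul1] := ul M; have [N2 ul2] := ul (M - δ); pose n := maxn N1 N2.
have -> : l - (y + H l) = - (u n.+1 - l) + H (u n - l).
  by rewrite (morph_addB HD) /= opprB !opprD !addrA subrK.
apply: val_addr_ge; first by rewrite val_oppr ul1 // leqW // leq_maxl.
by have := Hc _ _ (ul2 n (leq_maxr _ _)); rewrite subrK.
Qed.

Lemma sc_bijective lam v : is_nov lam -> lam v != 0 ->
  (forall r, lam r != 0 -> v <= r) -> bijective (sc lam).
Proof.
move=> lam_nov lam_v lam_min.
set m := mono (lam v)^-1 (- v); set eta := nov_tail lam v.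
have m_nov : is_nov m by exact: is_nov_mono.
have eta_nov : is_nov eta by exact: is_nov_tail.
have [δ δ0 eta_val] := nov_val_tail_gt0 lam_nov lam_v lam_min.
have surj y : exists x, sc lam x = y.
  have [x Hx] : exists x, x = sc m y + - sc eta x.
    apply: (contracting_fixpoint δ0) => [x z|M x xM].
      by rewrite scD // opprD.
    by rewrite val_oppr (val_sc HA) // EFinD addrC leeD.
  exists x; apply: (sc_injective m_nov); first by rewrite nov_val_mono ?invr_eq0.
  rewrite -(sc_mul HA) // nov_mul_lead_inv // (sc_addl HA) //.
  by rewrite (sc_one HA) {1}Hx subrK.
have [inv invK] := choice surj.
exists inv => //; apply: inj_can_sym invK (sc_injective lam_nov _).
by rewrite (nov_val_lead lam_v lam_min).
Qed.

Lemma gr_split x : exists x0, gr false x0 /\ gr true (x - x0).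
Proof.
have [x0 [x1 [x0_even [x1_odd ->]]]] := gr_span HA x.
by exists x0; rewrite addrC addKr.
Qed.

Definition even_part x : A := sval (cid (gr_split x)).

Definition parity x : A := even_part x - (x - even_part x).

Lemma even_part_eq x0 x1 : gr false x0 -> gr true x1 -> even_part (x0 + x1) = x0.
Proof.
move=> x0_even x1_odd; have [p_even r_odd] := svalP (cid (gr_split (x0 + x1))).
rewrite -/(even_part _) in p_even r_odd.
apply/eqP; rewrite -subr_eq0; apply/eqP/(gr_direct HA).
  by apply: (gr_add HA) => //; apply: grN.
have -> : even_part (x0 + x1) - x0 = x1 - (x0 + x1 - even_part (x0 + x1)).
  by rewrite opprB [x0 + x1]addrC opprD addrCA addNKr.
by apply: (gr_add HA) => //; apply: grN.
Qed.

Lemma parity_eq x0 x1 : gr false x0 -> gr true x1 -> parity (x0 + x1) = x0 - x1.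
Proof. by move=> x0_even x1_odd; rewrite /parity even_part_eq // [x0 + x1]addrC addrK. Qed.

Lemma parityD : {morph parity : x y / x + y}.
Proof.
move=> x y.
have [x0 [x1 [x0_even [x1_odd ->]]]] := gr_span HA x.
have [y0 [y1 [y0_even [y1_odd ->]]]] := gr_span HA y.
rewrite addrACA !parity_eq //; first by rewrite opprD addrACA.
all: exact: (gr_add HA).
Qed.

Lemma parityK : involutive parity.
Proof.
move=> x; have [x0 [x1 [x0_even [x1_odd ->]]]] := gr_span HA x.
by rewrite !parity_eq ?opprK //; apply: grN.
Qed.

Lemma parity_sc c x : is_nov c -> parity (sc c x) = sc c (parity x).
Proof.
move=> c_nov; have [x0 [x1 [x0_even [x1_odd ->]]]] := gr_span HA x.
rewrite scD // !parity_eq ?(morph_addB (scD c_nov)) //; exact: (gr_sc HA).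
Qed.

Lemma parity_mul x y : parity (mul x y) = mul (parity x) (parity y).
Proof.
have [x0 [x1 [x0_even [x1_odd ->]]]] := gr_span HA x.
have [y0 [y1 [y0_even [y1_odd ->]]]] := gr_span HA y.
rewrite !parity_eq // (morph_addB (mulDl _)) !(morph_addB (mulDr _)).
rewrite mulDl !mulDr [mul x1 y0 + _]addrC addrACA parity_eq.
- by rewrite opprB opprD addrACA.
- exact: (gr_add HA (gr_mul HA x0_even y0_even) (gr_mul HA x1_odd y1_odd)).
- exact: (gr_add HA (gr_mul HA x0_even y1_odd) (gr_mul HA x1_odd y0_even)).
Qed.

Lemma d_parity x : d (parity x) = - parity (d x).
Proof.
have [x0 [x1 [x0_even [x1_odd ->]]]] := gr_span HA x.
have dx0_odd := d_gr HA x0_even; have dx1_even := d_gr HA x1_odd.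
by rewrite parity_eq // (morph_addB dD) dD [d x0 + d x1]addrC parity_eq // opprB.
Qed.

Lemma d_mul x y : d (mul x y) = mul (d x) y + mul (parity x) (d y).
Proof.
have [x0 [x1 [x0_even [x1_odd ->]]]] := gr_span HA x.
rewrite parity_eq // mulDl dD (d_leibniz HA _ x0_even) (d_leibniz HA _ x1_odd) /=.
by rewrite dD mulDl (morph_addB (mulDl _)) addrACA.
Qed.

Section Eigenrelation.
Variables (lam : nov) (v : RR) (inv : A -> A) (beta : A).
Hypotheses (lam_nov : is_nov lam) (val_lam : nov_val lam = v%:E).
Hypotheses (scK : cancel (sc lam) inv) (invK : cancel inv (sc lam)).
Hypotheses (beta_cycle : d beta = 0) (val_beta : (v%:E < val beta)%E).

Lemma invD : {morph inv : x y / x + y}.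
Proof. by move=> x y; apply: (can_inj scK); rewrite scD // !invK. Qed.

Lemma inv_d x : inv (d x) = d (inv x).
Proof. by apply: (can_inj scK); rewrite invK -(d_sc HA) // invK. Qed.

Lemma inv_parity x : inv (parity x) = parity (inv x).
Proof. by apply: (can_inj scK); rewrite invK -parity_sc // invK. Qed.

Lemma val_inv x : val x = (v%:E + val (inv x))%E.
Proof. by rewrite -{1}(invK x) (val_sc HA) // val_lam. Qed.

Definition div_lmul x y := inv (mul x y).

Lemma div_lmulD x : {morph div_lmul x : y z / y + z}.
Proof. by move=> y z; rewrite /div_lmul mulDr invD. Qed.

Lemma parity_div_lmul x y : parity (div_lmul x y) = div_lmul (parity x) (parity y).
Proof. by rewrite /div_lmul -inv_parity parity_mul. Qed.

Lemma d_div_lmul x y :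
  d (div_lmul x y) = div_lmul (d x) y + div_lmul (parity x) (d y).
Proof. by rewrite /div_lmul -inv_d d_mul invD. Qed.

Lemma div_lmul_d_cycle w : div_lmul beta (d w) = d (div_lmul (parity beta) w).
Proof.
rewrite d_div_lmul d_parity beta_cycle (morph_add0 parityD) oppr0 parityK.
by rewrite /div_lmul (morph_add0 (mulDl w)) (morph_add0 invD) add0r.
Qed.

Lemma contracting_div_lmul : exists2 δ, 0 < δ & contracting (div_lmul beta) δ.
Proof.
have [δ δ0 vδ] : exists2 δ, 0 < δ & ((v + δ)%:E <= val beta)%E.
  move: val_beta; case: (val beta) => [b|_|//]; last by exists 1; rewrite ?leey.
  by rewrite lte_fin => vb; exists (b - v); rewrite ?subr_gt0 // addrC subrK.
exists δ => // M y yM; rewrite -(@leeD2lE _ v%:E) // -val_inv.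
apply: le_trans (val_mul HA beta y).
by rewrite -EFinD addrCA EFinD addeC leeD.
Qed.

Lemma exact_of_eigenrelation alpha :
  is_exact d (mul beta alpha - sc lam alpha) -> is_exact d alpha.
Proof.
case=> g Hg; set s := inv g.
have La : alpha = div_lmul beta alpha - d s.
  by rewrite /div_lmul /s -inv_d -Hg -(morph_addB invD) subKr scK.
have [δ δ0 Lc] := contracting_div_lmul.
have [V HV] := contracting_fixpoint δ0 (div_lmulD beta) Lc (- parity s).
have HW : div_lmul (parity beta) (parity V) = parity V + s.
  apply: (can_inj parityK); rewrite parity_div_lmul !parityK parityD parityK.
  by rewrite {2}HV addrAC addNr add0r.
exists (parity V); apply/eqP; rewrite -subr_eq0; apply/eqP.
apply: (contracting_fix_eq0 δ0 Lc).
by rewrite (morph_addB (div_lmulD beta)) div_lmul_d_cycle HW dD opprD addrA addrAC -La.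
Qed.

End Eigenrelation.
End ValuedDGA.

(* a = [alpha], b = [beta] in H(A) with beta a representative of b of
   valuation > val(lam);  b a = lam a  means  beta*alpha - lam*alpha is
   exact;  conclusion a = 0 means alpha is exact. *)
Theorem lemma3p2 (A : zmodType) (sc : nov -> A -> A) (mul : A -> A -> A)
    (d : A -> A) (gr : bool -> A -> Prop) (val : A -> \bar RR)
    (HA : valued_dga sc mul d gr val)
    (alpha beta : A) (Halpha : is_cycle d alpha) (Hbeta : is_cycle d beta)
    (lam : nov) (Hlam : is_nov lam) (Hlam0 : lam <> nov0)
    (Hba : is_exact d (mul beta alpha - sc lam alpha))
    (Hval : (nov_val lam < val beta)%E) :
  is_exact d alpha.
Proof.
have [v lam_v lam_min] := nov_min_exponent Hlam Hlam0.
have val_lam := nov_val_lead lam_v lam_min.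
have [inv scK invK] := sc_bijective HA Hlam lam_v lam_min.
rewrite val_lam in Hval.
exact: (exact_of_eigenrelation HA Hlam val_lam scK invK Hbeta Hval Hba).
Qed.
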